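(* Let $T_{a_1\dots a_r}$ be a rank-$r$ tensor and $i\in\{1,\dots,r\}$. Then $(T\,{}_i\!\times_i T)=0$ if and only if there exist a null vector $k$ (or $T=0$) and a rank-$(r-1)$ tensor $t$ such that $T_{a_1\dots a_r}=k_{a_i}\,t_{a_1\dots a_{i-1}a_{i+1}\dots a_r}$.
   Context: Lorentzian metric of signature $(+,-,\dots,-)$; null: $k\ne0$, $k\cdot k=0$. $(T\,{}_i\!\times_i T)_{a_1\dots a_{2r-2}}$ denotes the tensor obtained from $T\otimes T$ by contracting the $i$-th index of the first factor with the $i$-th index of the second factor, all other indices kept in order: $T_{a_1\dots a_{i-1}ba_i\dots a_{r-1}}T_{a_r\dots a_{r+i-2}}{}^{b}{}_{a_{r+i-1}\dots a_{2r-2}}$. *)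

From HB Require Import structures.
From mathcomp Require Import all_boot all_order all_algebra.
Set Implicit Arguments. Unset Strict Implicit. Unset Printing Implicit Defensive.
Import Order.TTheory GRing.Theory Num.Theory.
Local Open Scope ring_scope.

(* Spacetime dimension n, index set 'I_n; index 0 is the time direction.
   Minkowski metric eta = diag(+1,-1,...,-1) (it is its own inverse). *)
Definition eta (R : nzRingType) (n : nat) (b : 'I_n) : R :=
  if val b == 0%N then 1 else -1.

Definition vec (R : nzRingType) (n : nat) := {ffun 'I_n -> R}.
Definition multi_index (n r : nat) := {ffun 'I_r -> 'I_n}.
Definition tensor (R : nzRingType) (n r : nat) := {ffun multi_index n r -> R}.

Definition ldot (R : nzRingType) (n : nat) (k l : vec R n) : R :=
  \sum_(b < n) eta R b * k b * l b.

Definition is_null (R : nzRingType) (n : nat) (k : vec R n) : Prop :=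
  k <> 0 /\ ldot k k = 0.

Definition ins_index (n r : nat) (i : 'I_r.+1) (b : 'I_n) (a : multi_index n r)
  : multi_index n r.+1 :=
  [ffun m => match unlift i m with None => b | Some m' => a m' end].

Definition del_index (n r : nat) (i : 'I_r.+1) (a : multi_index n r.+1)
  : multi_index n r := [ffun m => a (lift i m)].

Definition fst_half (n r : nat) (a : multi_index n (r + r)) : multi_index n r :=
  [ffun m => a (lshift r m)].
Definition snd_half (n r : nat) (a : multi_index n (r + r)) : multi_index n r :=
  [ffun m => a (rshift r m)].

(* (T _i x_i T)_{a_1...a_{2r-2}} =
   T_{a_1..a_{i-1} b a_i..a_{r-1}} eta^{bc} T_{a_r..a_{r+i-2} c a_{r+i-1}..a_{2r-2}} *)
Definition contract (R : nzRingType) (n r : nat) (i : 'I_r.+1) (T : tensor R n r.+1)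
  : tensor R n (r + r) :=
  [ffun a => \sum_(b < n) eta R b * T (ins_index i b (fst_half a))
                                  * T (ins_index i b (snd_half a))].

(* Read the slot [i] of [T] as a family of vectors [fibre i T A], indexed by the
   remaining r indices [A].  Each component of [T _i x_i T] is the Lorentzian
   product of two fibres, so the contraction vanishes iff the fibres are null and
   pairwise orthogonal.  In Lorentzian signature two orthogonal null vectors are
   parallel, so all fibres are multiples [t A *: k] of one null vector [k], i.e.
   [T = k (x) t]; conversely [T _i x_i T] of such a tensor is a multiple of [k.k]. *)
From HB Require Import structures.
From mathcomp Require Import all_boot all_order all_algebra.
From mathcomp Require Import ring.
Set Implicit Arguments.
Unset Strict Implicit.
Unset Printing Implicit Defensive.

Import Order.TTheory GRing.Theory Num.Theory.
Local Open Scope ring_scope.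

Section LorentzianVectors.
Variable R : realFieldType.

Lemma sum_sqr_eq0 m (f : 'I_m -> R) : \sum_j f j ^+ 2 = 0 -> forall j, f j = 0.
Proof.
move=> f0 j; have := psumr_eq0P (P := xpredT) (fun j _ => sqr_ge0 (f j)) f0 isT.
by move=> /(_ j) /eqP; rewrite sqrf_eq0 => /eqP.
Qed.

Lemma ldot_recl n (u v : vec R n.+1) :
  ldot u v = u ord0 * v ord0 - \sum_j u (lift ord0 j) * v (lift ord0 j).
Proof.
rewrite /ldot big_ord_recl /eta /= mul1r -sumrN.
by congr (_ + _); apply: eq_bigr => j _; rewrite mulN1r mulNr.
Qed.

Lemma null_time_eq0 n (u : vec R n.+1) : ldot u u = 0 -> u ord0 = 0 -> u = 0.
Proof.
rewrite ldot_recl => /eqP; rewrite subr_eq0 => /eqP uu u0.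
have space0 : \sum_j u (lift ord0 j) ^+ 2 = 0.
  by rewrite -[RHS](mulr0 0) -{2 3}u0 uu; apply: eq_bigr => j _; rewrite expr2.
apply/ffunP => b; rewrite ffunE.
by case: (unliftP ord0 b) => [j -> | ->] //; exact: sum_sqr_eq0 space0 j.
Qed.

Lemma orthogonal_null_parallel n (u v : vec R n) :
  u <> 0 -> ldot u u = 0 -> ldot u v = 0 -> ldot v v = 0 ->
  exists c, forall b, v b = c * u b.
Proof.
case: n u v => [|n] u v u_neq0; first by case: u_neq0; apply/ffunP => -[].
move=> uu0; move: (uu0); rewrite !ldot_recl.
move=> /eqP; rewrite subr_eq0 => /eqP uu /eqP; rewrite subr_eq0 => /eqP uv.
move=> /eqP; rewrite subr_eq0 => /eqP vv.
have u0_neq0 : u ord0 != 0 by apply/eqP => /(null_time_eq0 uu0).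
pose w j := v ord0 * u (lift ord0 j) - u ord0 * v (lift ord0 j).
(* Lagrange's identity for the spatial parts, whose products are fixed by the time components. *)
have w0 : \sum_j w j ^+ 2 = 0.
  transitivity (v ord0 ^+ 2 * \sum_j u (lift ord0 j) * u (lift ord0 j)
    - 2 * (u ord0 * v ord0) * \sum_j u (lift ord0 j) * v (lift ord0 j)
    + u ord0 ^+ 2 * \sum_j v (lift ord0 j) * v (lift ord0 j)).
    by rewrite !mulr_sumr -sumrB -big_split /=; apply: eq_bigr => j _; rewrite /w; ring.
  by rewrite -uu -uv -vv; ring.
exists (v ord0 / u ord0) => b.
case: (unliftP ord0 b) => [j -> | ->]; last by rewrite divfK.
move/eqP: (sum_sqr_eq0 w0 j); rewrite subr_eq0 => /eqP wj.
by rewrite mulrAC wj mulrAC divff // mul1r.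
Qed.

Lemma orthogonal_null_family (I : finType) n (f : I -> vec R n) :
  (forall x y, ldot (f x) (f y) = 0) ->
  (forall x, f x = 0) \/
  exists (k : vec R n) (c : I -> R), is_null k /\ forall x b, f x b = c x * k b.
Proof.
move=> orth; case: (pickP (fun x => f x != 0)) => [x0 fx0_neq0 | f0]; last first.
  by left=> x; apply/eqP; rewrite -[_ == _]negbK f0.
have {}fx0_neq0 : f x0 <> 0 by apply/eqP.
have coef x : exists c, [forall b, f x b == c * f x0 b].
  have [c fxE] := orthogonal_null_parallel fx0_neq0 (orth _ _) (orth x0 x) (orth _ _).
  by exists c; apply/forallP => b; rewrite fxE.
right; exists (f x0), (fun x => xchoose (coef x)); split => // x b.
by have /forallP/(_ b)/eqP := xchooseP (coef x).
Qed.

End LorentzianVectors.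

Section MultiIndices.
Variables (n r : nat).

Lemma ins_del_index (i : 'I_r.+1) (a : multi_index n r.+1) :
  ins_index i (a i) (del_index i a) = a.
Proof.
apply/ffunP => m; rewrite ffunE.
by case: (unliftP i m) => [m' -> | ->]; rewrite ?ffunE.
Qed.

Lemma ins_index_at (i : 'I_r.+1) b (A : multi_index n r) : ins_index i b A i = b.
Proof. by rewrite ffunE unlift_none. Qed.

Lemma del_ins_index (i : 'I_r.+1) b (A : multi_index n r) :
  del_index i (ins_index i b A) = A.
Proof. by apply/ffunP => m; rewrite !ffunE liftK. Qed.

Definition cat_index (A B : multi_index n r) : multi_index n (r + r) :=
  [ffun m => match split m with inl x => A x | inr y => B y end].

Lemma fst_half_cat A B : fst_half (cat_index A B) = A.
Proof. by apply/ffunP => m; rewrite !ffunE (unsplitK (inl _)). Qed.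

Lemma snd_half_cat A B : snd_half (cat_index A B) = B.
Proof. by apply/ffunP => m; rewrite !ffunE (unsplitK (inr _)). Qed.

End MultiIndices.

Section Contraction.
Variables (n r : nat) (i : 'I_r.+1).

Definition fibre (R : nzRingType) (T : tensor R n r.+1) (A : multi_index n r)
  : vec R n := [ffun b => T (ins_index i b A)].

Lemma fibre_del (R : nzRingType) (T : tensor R n r.+1) a :
  fibre T (del_index i a) (a i) = T a.
Proof. by rewrite ffunE ins_del_index. Qed.

Lemma contract_cat (R : nzRingType) (T : tensor R n r.+1) A B :
  contract i T (cat_index A B) = ldot (fibre T A) (fibre T B).
Proof.
rewrite ffunE fst_half_cat snd_half_cat.
by apply: eq_bigr => b _; rewrite !ffunE.
Qed.

Lemma contract0 (R : nzRingType) : contract i (0 : tensor R n r.+1) = 0.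
Proof. by apply/ffunP => a; rewrite !ffunE big1 // => b _; rewrite !ffunE !mulr0. Qed.

Lemma contract_outer (R : comNzRingType) (T : tensor R n r.+1) (k : vec R n)
    (t : tensor R n r) :
  (forall a, T a = k (a i) * t (del_index i a)) ->
  forall a, contract i T a = ldot k k * (t (fst_half a) * t (snd_half a)).
Proof.
move=> TE a; rewrite ffunE /ldot mulr_suml.
by apply: eq_bigr => b _; rewrite !TE !ins_index_at !del_ins_index; ring.
Qed.

End Contraction.

Theorem mainTheorem14 (R : realFieldType) (n r : nat)
    (T : tensor R n r.+1) (i : 'I_r.+1) :
  contract i T = 0 <->
  exists (k : vec R n) (t : tensor R n r),
    (is_null k \/ T = 0) /\
    (forall a : multi_index n r.+1, T a = k (a i) * t (del_index i a)).
Proof.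
split=> [T_sq0 | [k [t [[[_ kk0] | T0] TE]]]].
- have orth A B : ldot (fibre i T A) (fibre i T B) = 0.
    by rewrite -contract_cat T_sq0 ffunE.
  have [fibre0 | [k [c [k_null fibreE]]]] := orthogonal_null_family orth.
    have T0 : T = 0 by apply/ffunP => a; rewrite -(fibre_del i) fibre0 !ffunE.
    by exists 0, 0; split => [|a]; [right | rewrite T0 !ffunE mul0r].
  exists k, [ffun A => c A]; split; first by left.
  by move=> a; rewrite -(fibre_del i) fibreE ffunE mulrC.
- by apply/ffunP => a; rewrite (contract_outer TE) kk0 mul0r ffunE.
- by rewrite T0 contract0.
Qed.
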